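(* For every integer $k \ge 1$, \[ \pi = 2^{k+1}\, i \sum_{m=1}^{\infty} \frac{1}{2m-1}\left( \frac{1}{\left(1 + 2i\, a_k/\sqrt{2 - a_{k-1}}\right)^{2m-1}} - \frac{1}{\left(1 - 2i\, a_k/\sqrt{2 - a_{k-1}}\right)^{2m-1}} \right), \] where the series converges.
   Context: Here $i$ is the imaginary unit. The nested radicals $a_k$ are defined by $a_0 = 0$ and $a_k = \sqrt{2 + a_{k-1}}$ for $k \ge 1$. Thus $a_1 = \sqrt{2}$, and in general $a_k = \sqrt{2+\sqrt{2+\cdots+\sqrt{2}}}$ with $k$ square roots. *)

From Stdlib Require Import Reals.
From Coquelicot Require Import Coquelicot.
Open Scope R_scope.

Fixpoint a (k : nat) : R :=
  match k with
  | O => 0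
  | S j => sqrt (2 + a j)
  end.

Definition xk (k : nat) : R := a k / sqrt (2 - a (k - 1)).

Definition term (k m : nat) : C :=
  let n := (2 * m - 1)%nat in
  Cmult (RtoC (/ INR n))
    (Cminus (Cinv (Cpow (Cplus (RtoC 1) (Cmult (RtoC (2 * xk k)) Ci)) n))
            (Cinv (Cpow (Cminus (RtoC 1) (Cmult (RtoC (2 * xk k)) Ci)) n))).

From Stdlib Require Import Reals Lra Lia.
From Coquelicot Require Import Coquelicot.
Open Scope R_scope.

(* With z = 1 / (1 + 2 i x_k), the m-th term is 2 i Im (z^(2m-1)) / (2m-1), so the series is
   2 i Im artanh z.  The partial sums of Im artanh (t z) have t-derivatives that differ from
   Im (z / (1 - t^2 z^2)) by O(|z|^(2N)) uniformly on [0, 1], so by the mean value theorem they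
   converge at t = 1 to F 1 for any primitive F of Im (z / (1 - t^2 z^2)) with F 0 = 0.
   Partial fractions give such an F made of arctangents, with F 1 = -atan (1 / x_k) / 2.
   Finally the half-angle formula gives a_k = 2 cos (pi / 2^(k+1)), so x_k = cot (pi / 2^(k+1)). *)

Lemma is_lim_seq_geometric_error (u : nat -> R) (l K q : R) :
  Rabs q < 1 -> (forall N, Rabs (u N - l) <= K * q ^ N) -> is_lim_seq u l.
Proof.
  intros hq hu.
  assert (hK : is_lim_seq (fun N => K * q ^ N) 0).
  { replace 0 with (K * 0) by ring.
    apply is_lim_seq_mult'; [apply is_lim_seq_const | now apply is_lim_seq_geom]. }
  apply (is_lim_seq_le_le (fun N => l - K * q ^ N) _ (fun N => l + K * q ^ N)).
  - intros N; apply Rabs_le_between', hu.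
  - pose proof (is_lim_seq_minus' _ _ l 0 (is_lim_seq_const l) hK) as h.
    now rewrite Rminus_0_r in h.
  - pose proof (is_lim_seq_plus' _ _ l 0 (is_lim_seq_const l) hK) as h.
    now rewrite Rplus_0_r in h.
Qed.

Lemma sum_n_RtoC (a : nat -> R) N : sum_n (fun n => RtoC (a n)) N = RtoC (sum_n a N).
Proof.
  induction N as [|N IH].
  - now rewrite !sum_O.
  - rewrite !sum_Sn, IH. apply injective_projections; simpl; [reflexivity | ring].
Qed.

Lemma is_series_RtoC (a : nat -> R) (l : R) :
  is_series a l -> is_series (fun n => RtoC (a n)) (RtoC l).
Proof.
  intros ha.
  apply (filterlim_ext (fun N => RtoC (sum_n a N))).
  { intros N; symmetry; apply sum_n_RtoC. }
  apply filterlim_locally; intros eps.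
  generalize (proj1 (filterlim_locally _ _) ha eps); apply filter_imp.
  intros N hN; split; [exact hN | apply ball_center].
Qed.

Lemma im_sum_n (f : nat -> C) N : Im (sum_n f N) = sum_n (fun n => Im (f n)) N.
Proof.
  induction N as [|N IH].
  - now rewrite !sum_O.
  - now rewrite !sum_Sn, im_plus, IH.
Qed.

Lemma Cmod_one_sub_ge (u : C) : 1 - Cmod u <= Cmod (1 - u).
Proof.
  pose proof (Cmod_triangle (1 - u) u) as h.
  replace (1 - u + u)%C with (RtoC 1) in h by ring.
  rewrite Cmod_1 in h; lra.
Qed.

Lemma Rabs_Im_le_Cmod (u : C) : Rabs (Im u) <= Cmod u.
Proof. eapply Rle_trans; [apply Rmax_r | apply Rmax_Cmod]. Qed.

Section OddPowers.

Variable z : C.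
Hypothesis hz : Cmod z < 1.

(* The t-derivative of artanh (t z). *)
Definition artanh_deriv (t : R) : C := (z / (1 - (RtoC t * z) ^ 2))%C.

Lemma Cmod_one_sub_sq_ge t :
  0 <= t <= 1 -> 1 - Cmod z ^ 2 <= Cmod (1 - (RtoC t * z) ^ 2).
Proof.
  intros ht.
  eapply Rle_trans; [| apply Cmod_one_sub_ge].
  rewrite Cmod_pow, Cmod_mult, Cmod_R, Rabs_pos_eq by lra.
  pose proof (Cmod_ge_0 z).
  assert (t * Cmod z <= Cmod z) by nra.
  assert (0 <= t * Cmod z) by nra.
  nra.
Qed.

Lemma one_sub_sq_neq0 t : 0 <= t <= 1 -> (1 - (RtoC t * z) ^ 2)%C <> 0%C.
Proof.
  intros ht h0.
  pose proof (Cmod_one_sub_sq_ge t ht) as h.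
  rewrite h0, Cmod_0 in h.
  pose proof (Cmod_ge_0 z).
  nra.
Qed.

Lemma Cmod_artanh_deriv_le t :
  0 <= t <= 1 -> Cmod (artanh_deriv t) <= Cmod z / (1 - Cmod z ^ 2).
Proof.
  intros ht.
  pose proof (Cmod_ge_0 z).
  unfold artanh_deriv; rewrite Cmod_div by now apply one_sub_sq_neq0.
  apply Rmult_le_compat_l; [lra |].
  apply Rinv_le_contravar; [nra | now apply Cmod_one_sub_sq_ge].
Qed.

Lemma sum_n_odd_geom t N : 0 <= t <= 1 ->
  sum_n (fun n => (RtoC t * z) ^ (2 * n) * z)%C N
  = (artanh_deriv t - (RtoC t * z) ^ (2 * N + 2) * artanh_deriv t)%C.
Proof.
  intros ht.
  pose proof (one_sub_sq_neq0 t ht) as hd.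
  unfold artanh_deriv.
  induction N as [|N IH].
  - rewrite sum_O; simpl.
    field; contradict hd; rewrite <- hd; ring.
  - rewrite sum_Sn, IH.
    replace (2 * S N + 2)%nat with (2 * N + 2 + 2)%nat by lia.
    replace (2 * S N)%nat with (2 * N + 2)%nat by lia.
    rewrite (Cpow_add_r _ (2 * N + 2) 2).
    change plus with Cplus.
    (* [field] only recognizes the equation once it is stated at type [C]. *)
    match goal with |- ?lhs = ?rhs => change (@eq C lhs rhs) end.
    field; contradict hd; rewrite <- hd; ring.
Qed.

Definition im_artanh_partial (N : nat) (t : R) : R :=
  sum_n (fun n => t ^ (2 * n + 1) * Im (z ^ (2 * n + 1)) / INR (2 * n + 1)) N.

Lemma is_derive_im_artanh_partial N t :
  is_derive (im_artanh_partial N) t (Im (sum_n (fun n => (RtoC t * z) ^ (2 * n) * z)%C N)).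
Proof.
  rewrite im_sum_n; unfold im_artanh_partial.
  apply (is_derive_sum_n (fun n t => t ^ (2 * n + 1) * Im (z ^ (2 * n + 1)) / INR (2 * n + 1)));
    intros n _.
  rewrite Cpow_mult_l, <- RtoC_pow, <- Cmult_assoc.
  replace (z ^ (2 * n) * z)%C with (z ^ (2 * n + 1))%C by (rewrite Cpow_add_r; simpl; ring).
  (* An opaque exponent keeps [auto_derive] from normalizing [2 * n] out of shape. *)
  generalize (2 * n)%nat as m; intros m.
  assert (hm : INR (m + 1) <> 0) by (apply not_0_INR; lia).
  auto_derive; auto.
  replace (pred (m + 1)) with m by lia.
  rewrite Cpow_add_r; unfold Im; simpl; field; exact hm.
Qed.

Lemma im_artanh_partial_0 N : im_artanh_partial N 0 = 0.
Proof.
  unfold im_artanh_partial.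
  rewrite (sum_n_ext _ (fun _ => 0)), sum_n_const.
  - apply Rmult_0_r.
  - intros n; rewrite pow_i by lia; unfold Rdiv; now rewrite !Rmult_0_l.
Qed.

Section Primitive.

Variable F : R -> R.
Hypothesis F_0 : F 0 = 0.
Hypothesis is_derive_F : forall t, 0 <= t <= 1 -> is_derive F t (Im (artanh_deriv t)).

Lemma im_artanh_partial_error N :
  Rabs (im_artanh_partial N 1 - F 1) <= Cmod z / (1 - Cmod z ^ 2) * (Cmod z ^ 2) ^ S N.
Proof.
  destruct (MVT_abs (fun t => im_artanh_partial N t - F t)
              (fun t => Im (sum_n (fun n => (RtoC t * z) ^ (2 * n) * z)%C N) - Im (artanh_deriv t))
              0 1) as [c [hmvt hc]].
  { intros c hc; rewrite Rmin_left, Rmax_right in hc by lra.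
    apply is_derive_Reals, (is_derive_minus (im_artanh_partial N) F).
    - apply is_derive_im_artanh_partial.
    - apply is_derive_F; lra. }
  rewrite Rmin_left, Rmax_right in hc by lra.
  rewrite im_artanh_partial_0, F_0, Rminus_0_r, Rminus_0_r, Rminus_0_r, Rabs_R1, Rmult_1_r in hmvt.
  rewrite hmvt, sum_n_odd_geom by lra.
  set (p := ((RtoC c * z) ^ (2 * N + 2))%C).
  replace (Im (artanh_deriv c - p * artanh_deriv c) - Im (artanh_deriv c))
    with (- Im (p * artanh_deriv c)) by (unfold Im; simpl; ring).
  rewrite Rabs_Ropp, Rmult_comm.
  eapply Rle_trans; [apply Rabs_Im_le_Cmod |].
  rewrite Cmod_mult.
  apply Rmult_le_compat; try apply Cmod_ge_0.
  - unfold p; rewrite Cmod_pow, Cmod_mult, Cmod_R, Rabs_pos_eq by lra.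
    replace (2 * N + 2)%nat with (2 * S N)%nat by lia.
    rewrite pow_mult.
    apply pow_incr; split; [apply pow2_ge_0 |].
    pose proof (Cmod_ge_0 z). apply pow_incr; split; nra.
  - now apply Cmod_artanh_deriv_le.
Qed.

Lemma is_series_im_odd_powers :
  is_series (fun n => Im (z ^ (2 * n + 1)) / INR (2 * n + 1)) (F 1).
Proof.
  pose proof (Cmod_ge_0 z).
  apply (is_lim_seq_geometric_error _ _ (Cmod z / (1 - Cmod z ^ 2) * Cmod z ^ 2) (Cmod z ^ 2)).
  - rewrite Rabs_pos_eq by apply pow2_ge_0. nra.
  - intros N.
    replace (sum_n _ N) with (im_artanh_partial N 1).
    + rewrite Rmult_assoc; apply im_artanh_partial_error.
    + apply sum_n_ext; intros n; now rewrite pow1, Rmult_1_l.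
Qed.

End Primitive.

End OddPowers.

Section CotangentSeries.

Variable x : R.
Hypothesis hx : x <> 0.

Let w : C := Cplus (RtoC 1) (Cmult (RtoC (2 * x)) Ci).

(* Im artanh (t / w), from the partial fractions
   w / (w^2 - t^2) = (1 / (w - t) + 1 / (w + t)) / 2. *)
Let im_artanh_inv (t : R) : R := (atan ((1 - t) / (2 * x)) - atan ((1 + t) / (2 * x))) / 2.

Lemma Cmod_inv_lt_1 : Cmod (/ w) < 1.
Proof.
  assert (hw : Cmod w ^ 2 = 1 + 4 * x ^ 2) by (rewrite Cmod2_alt; unfold w, Re, Im; simpl; ring).
  assert (hx2 : 0 < x ^ 2) by (apply pow2_gt_0; exact hx).
  pose proof (Cmod_ge_0 w).
  rewrite Cmod_inv.
  - rewrite <- Rinv_1; apply Rinv_0_lt_contravar; [lra | nra].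
  - intros h0; rewrite h0, Cmod_0 in hw; nra.
Qed.

Lemma im_artanh_deriv_inv t :
  Im (artanh_deriv (/ w) t) = - x / ((1 - t) ^ 2 + 4 * x ^ 2) - x / ((1 + t) ^ 2 + 4 * x ^ 2).
Proof.
  assert (hx2 : 0 < x * x) by (apply Rsqr_pos_lt, hx).
  assert (hm : (w - RtoC t)%C <> 0)
    by (intros h; apply (f_equal Im) in h; unfold w, Im in h; simpl in h; lra).
  assert (hp : (w + RtoC t)%C <> 0)
    by (intros h; apply (f_equal Im) in h; unfold w, Im in h; simpl in h; lra).
  assert (hw : w <> 0)
    by (intros h; apply (f_equal Im) in h; unfold w, Im in h; simpl in h; lra).
  assert (hpf : artanh_deriv (/ w) t = ((/ (w - RtoC t) + / (w + RtoC t)) / 2)%C).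
  { unfold artanh_deriv; field; repeat split; try assumption.
    replace (w ^ 2 - RtoC t ^ 2)%C with ((w - RtoC t) * (w + RtoC t))%C by ring.
    now apply Cmult_neq_0. }
  pose proof (Rle_0_sqr (1 + t)); pose proof (Rle_0_sqr (1 - t)); unfold Rsqr in *.
  rewrite hpf; unfold w, Im; simpl; field; split; apply Rgt_not_eq; lra.
Qed.

Lemma is_derive_im_artanh_inv t : is_derive im_artanh_inv t (Im (artanh_deriv (/ w) t)).
Proof.
  assert (hx2 : 0 < x * x) by (apply Rsqr_pos_lt, hx).
  pose proof (Rle_0_sqr (1 + t)); pose proof (Rle_0_sqr (1 - t)); unfold Rsqr in *.
  rewrite im_artanh_deriv_inv; unfold im_artanh_inv.
  auto_derive; [easy |].
  field; repeat split; try exact hx; apply Rgt_not_eq; lra.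
Qed.

Lemma im_artanh_inv_0 : im_artanh_inv 0 = 0.
Proof. unfold im_artanh_inv; rewrite Rplus_0_r, Rminus_0_r; lra. Qed.

Lemma im_artanh_inv_1 : im_artanh_inv 1 = - atan (/ x) / 2.
Proof.
  unfold im_artanh_inv; rewrite Rminus_diag, Rdiv_0_l, atan_0.
  replace ((1 + 1) / (2 * x)) with (/ x) by (field; exact hx); lra.
Qed.

Lemma inv_pow_sub_inv_conj_pow n :
  Cmult (RtoC (/ INR n)) (Cminus (Cinv (Cpow w n))
    (Cinv (Cpow (Cminus (RtoC 1) (Cmult (RtoC (2 * x)) Ci)) n)))
  = (2 * Ci * RtoC (Im ((/ w) ^ n) / INR n))%C.
Proof.
  assert (hw : w <> 0)
    by (intros h; apply (f_equal Re) in h; unfold w, Re in h; simpl in h; lra).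
  assert (hconj : Cminus (RtoC 1) (Cmult (RtoC (2 * x)) Ci) = Cconj w)
    by (apply injective_projections; unfold w; simpl; ring).
  assert (hw' : Cconj w <> 0)
    by (intros h; apply (f_equal Re) in h; unfold w, Re in h; simpl in h; lra).
  rewrite hconj, <- !Cpow_inv, <- Cinv_conj, <- Cpow_conj, im_alt' by assumption.
  unfold Rdiv; rewrite RtoC_mult; ring.
Qed.

Lemma is_series_inv_pow_sub_inv_conj_pow :
  is_series (fun n => Cmult (RtoC (/ INR (2 * n + 1))) (Cminus (Cinv (Cpow w (2 * n + 1)))
    (Cinv (Cpow (Cminus (RtoC 1) (Cmult (RtoC (2 * x)) Ci)) (2 * n + 1)))))
    (- Ci * RtoC (atan (/ x)))%C.
Proof.
  apply (is_series_ext (fun n => 2 * Ci * RtoC (Im ((/ w) ^ (2 * n + 1)) / INR (2 * n + 1)))%C).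
  { intros n; symmetry; apply inv_pow_sub_inv_conj_pow. }
  replace (- Ci * RtoC (atan (/ x)))%C with (2 * Ci * RtoC (im_artanh_inv 1))%C.
  - apply (@is_series_scal C_AbsRing C_NormedModule), is_series_RtoC,
      (is_series_im_odd_powers (/ w) Cmod_inv_lt_1 im_artanh_inv im_artanh_inv_0).
    intros t _; apply is_derive_im_artanh_inv.
  - rewrite im_artanh_inv_1; apply injective_projections; simpl; field.
Qed.

End CotangentSeries.

Lemma PI_div_pow2_bounds j : 0 < PI / 2 ^ (j + 2) < PI / 2.
Proof.
  pose proof PI_RGT_0.
  pose proof (pow_R1_Rle 2 j ltac:(lra)).
  rewrite pow_add; simpl pow.
  split.
  - apply Rdiv_lt_0_compat; nra.
  - apply Rmult_lt_compat_l; [lra |]. apply Rinv_lt_contravar; nra.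
Qed.

Lemma PI_div_pow2_double j : PI / 2 ^ (j + 1) = 2 * (PI / 2 ^ (j + 2)).
Proof.
  replace (j + 2)%nat with (S (j + 1)) by lia; simpl pow.
  field; apply pow_nonzero; lra.
Qed.

Lemma a_eq_cos k : a k = 2 * cos (PI / 2 ^ (k + 1)).
Proof.
  induction k as [|k IH].
  - simpl; replace (PI / (2 * 1)) with (PI / 2) by field; rewrite cos_PI2; ring.
  - simpl a; rewrite IH.
    replace (S k + 1)%nat with (k + 2)%nat by lia.
    destruct (PI_div_pow2_bounds k) as [h0 h1].
    set (t := PI / 2 ^ (k + 2)) in *.
    rewrite PI_div_pow2_double; fold t.
    assert (0 <= cos t) by (apply cos_ge_0; lra).
    rewrite cos_2a_cos.
    replace (2 + 2 * (2 * cos t * cos t - 1)) with ((2 * cos t) ^ 2) by ring.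
    apply sqrt_pow2; lra.
Qed.

Lemma xk_eq_cot j : xk (S j) = cos (PI / 2 ^ (j + 2)) / sin (PI / 2 ^ (j + 2)).
Proof.
  unfold xk; replace (S j - 1)%nat with j by lia.
  rewrite !a_eq_cos; replace (S j + 1)%nat with (j + 2)%nat by lia.
  destruct (PI_div_pow2_bounds j) as [h0 h1].
  set (t := PI / 2 ^ (j + 2)) in *.
  rewrite PI_div_pow2_double; fold t.
  assert (0 < sin t) by (apply sin_gt_0; lra).
  rewrite cos_2a_sin.
  replace (2 - 2 * (1 - 2 * sin t * sin t)) with ((2 * sin t) ^ 2) by ring.
  rewrite sqrt_pow2 by lra; field; lra.
Qed.

Lemma xk_pos j : 0 < xk (S j).
Proof.
  destruct (PI_div_pow2_bounds j).
  rewrite xk_eq_cot; apply Rdiv_lt_0_compat; [apply cos_gt_0 | apply sin_gt_0]; lra.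
Qed.

Lemma atan_inv_xk j : atan (/ xk (S j)) = PI / 2 ^ (j + 2).
Proof.
  rewrite xk_eq_cot.
  destruct (PI_div_pow2_bounds j).
  set (t := PI / 2 ^ (j + 2)) in *.
  assert (0 < sin t) by (apply sin_gt_0; lra).
  assert (0 < cos t) by (apply cos_gt_0; lra).
  replace (/ (cos t / sin t)) with (tan t) by (unfold tan; field; lra).
  apply atan_tan; lra.
Qed.

Theorem mainTheorem1 (k : nat) (hk : (1 <= k)%nat) :
  exists s : C,
    is_series (fun n : nat => term k (S n)) s /\
    RtoC PI = Cmult (Cmult (RtoC (2 ^ (k + 1))) Ci) s.
Proof.
  destruct k as [|j]; [lia |].
  exists (- Ci * RtoC (atan (/ xk (S j))))%C; split.
  - eapply is_series_ext; [| apply is_series_inv_pow_sub_inv_conj_pow, Rgt_not_eq, xk_pos].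
    intros n; unfold term; now replace (2 * S n - 1)%nat with (2 * n + 1)%nat by lia.
  - rewrite atan_inv_xk; replace (S j + 1)%nat with (j + 2)%nat by lia.
    apply injective_projections; simpl; field; apply pow_nonzero; lra.
Qed.
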